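(* Let $\boldsymbol\pi\in\mathcal P^+$ and let $V\in\hat{\mathcal F}$ be a self-extension of $V(\boldsymbol\pi)$. Then $V$ is non-trivial if and only if $V_{\mathrm{wt}\boldsymbol\pi}$ contains a unique (up to scalars) highest-$\ell$-weight vector. Moreover, if $V$ is non-trivial and $v\in V_{\mathrm{wt}\boldsymbol\pi}$ is not an $\ell$-weight vector, then $V=\hat{\mathbf U}_qv$.
   Context: Setting: $R$ irreducible reduced root system with simple roots indexed by $I$, fundamental weights $\omega_i$, weight lattice $P$, $d_i$ symmetrizing integers, $q\in\mathbb C^\times$ not a root of unity, $q_i=q^{d_i}$, $[m]_i=(q_i^m-q_i^{-m})/(q_i-q_i^{-1})$. $\hat{\mathbf U}_q$ is the quantum loop algebra of $R$ with Drinfeld generators $x^\pm_{i,r}$ ($r\in\mathbb Z$), $h_{i,s}$ ($s\in\mathbb Z\setminus\{0\}$), $k_i^{\pm1}$. A module $V$ is of type 1 if $V=\bigoplus_{\mu\in P}V_\mu$, $V_\mu=\{v:k_iv=q_i^{\mu_i}v\}$ where $\mu=\sum\mu_i\omega_i$; $\hat{\mathcal F}$ is the category of finite-dimensional type 1 modules. An $\ell$-weight vector is a simultaneous eigenvector of all $h_{i,s}$; a highest-$\ell$-weight vector is an $\ell$-weight vector lying in some $V_\mu$ and annihilated by all $x^+_{i,r}$. $\mathcal P^+$ is the monoid of $I$-tuples $\boldsymbol\pi=(\pi_i)$ of polynomials with constant term 1, $\mathrm{wt}\boldsymbol\pi=\sum_i(\deg\pi_i)\omega_i$, and $V(\boldsymbol\pi)$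 is the simple object of $\hat{\mathcal F}$ generated by a highest-$\ell$-weight vector $v(\boldsymbol\pi)\in V(\boldsymbol\pi)_{\mathrm{wt}\boldsymbol\pi}$ with $h_{i,s}$-eigenvalues $h_{i,s}(\boldsymbol\pi)$ given by $\exp(-\sum_{s\ge1}h_{i,\pm s}(\boldsymbol\pi)u^s/[s]_i)=\pi_i^\pm(u)$ ($\pi_i^+=\pi_i$, $\pi_i^-(u)=u^{\deg\pi_i}\pi_i(u^{-1})$ normalized to constant term 1). A self-extension of $V(\boldsymbol\pi)$ is an object $V$ of $\hat{\mathcal F}$ fitting in a short exact sequence $0\to V(\boldsymbol\pi)\to V\to V(\boldsymbol\pi)\to0$; it is trivial if $V\cong V(\boldsymbol\pi)\oplus V(\boldsymbol\pi)$ and non-trivial otherwise. *)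

From HB Require Import structures.
From mathcomp Require Import all_boot all_order all_algebra all_fingroup.
From mathcomp Require Import complex.
From mathcomp Require Import Rstruct.
Set Implicit Arguments.
Unset Strict Implicit.
Unset Printing Implicit Defensive.
Import Order.TTheory GRing.Theory Num.Theory.
Local Open Scope ring_scope.

Definition C : fieldType := complex Rdefinitions.R.

Definition finite_cartan (n : nat) (A : 'M[int]_n) (d : 'I_n -> nat) : Prop :=
  (0 < n)%N /\
      (forall i, A i i = 2%:Z) /\
      (forall i j, i != j -> A i j <= 0) /\
      (forall i, (0 < d i)%N) /\
      (forall i j, (d i)%:Z * A i j = (d j)%:Z * A j i) /\
      (forall x : 'I_n -> rat, (exists i, x i != 0) ->
         0 < \sum_i \sum_j x i * ((d i)%:Z * A i j)%:~R * x j) /\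
      (forall S : {set 'I_n}, S != set0 -> S != setT ->
         exists i, exists j, [/\ i \in S, j \notin S & A i j != 0]).

Definition not_root_of_unity (q : C) : Prop :=
  q != 0 /\ forall k : nat, (0 < k)%N -> q ^+ k != 1.

Section QLoop.
Variables (n : nat) (A : 'M[int]_n) (d : 'I_n -> nat) (q : C).

Definition qi (i : 'I_n) : C := q ^+ d i.
Definition qint (i : 'I_n) (m : int) : C :=
  (qi i ^ m - qi i ^ (- m)) / (qi i - (qi i)^-1).
Definition qfact (i : 'I_n) (k : nat) : C := \prod_(1 <= j < k.+1) qint i j%:Z.
Definition qbinom (i : 'I_n) (m k : nat) : C :=
  qfact i m / (qfact i k * qfact i (m - k)).

(* Coefficients of exp(F(u)) for a formal power series F(u) = sum_{s>=1} F_s u^s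
   (F_0 ignored), computed by  r Phi_r = sum_{s=1}^r s F_s Phi_{r-s},
   Phi_0 = 1, in an algebra given by a multiplication [mul] and unit [one]. *)
Fixpoint expseq (T : lmodType C) (mul : T -> T -> T) (one : T)
    (F : nat -> T) (r : nat) : seq T :=
  match r with
  | 0 => [:: one]
  | r'.+1 =>
      let l := expseq mul one F r' in
      rcons l ((r'.+1)%:R^-1 *:
                 \sum_(s < r'.+1) ((s.+1)%:R *: mul (F s.+1) (nth 0 l (r' - s))))
  end.
Definition expcoef (T : lmodType C) (mul : T -> T -> T) (one : T)
    (F : nat -> T) (r : nat) : T := nth 0 (expseq mul one F r) r.

(* A representation of the quantum loop algebra on C^m (column vectors):
   images of x^+_{i,r}, x^-_{i,r}, h_{i,s} (only s <> 0 is meaningful) and k_i. *)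
Record qlmod (m : nat) := QLMod {
  xp : 'I_n -> int -> 'M[C]_m;
  xm : 'I_n -> int -> 'M[C]_m;
  hh : 'I_n -> int -> 'M[C]_m;
  kk : 'I_n -> 'M[C]_m }.

Section Rep.
Variables (m : nat) (M : qlmod m).
Local Notation xp := (xp M).
Local Notation xm := (xm M).
Local Notation hh := (hh M).
Local Notation kk := (kk M).
Local Notation kinv i := (invmx (kk i)).

Definition mexp (F : nat -> 'M[C]_m) (r : nat) : 'M[C]_m :=
  @expcoef 'M[C]_m (@mulmx C m m m) 1%:M F r.

(* psi^+_i(u) = k_i exp((q_i - q_i^{-1}) sum_{s>=1} h_{i,s} u^s),
   psi^-_i(u) = k_i^{-1} exp(-(q_i - q_i^{-1}) sum_{s>=1} h_{i,-s} u^{-s}) *)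
Definition psip (i : 'I_n) (z : int) : 'M[C]_m :=
  if z < 0 then 0
  else kk i *m mexp (fun s => (qi i - (qi i)^-1) *: hh i s%:Z) `|z|%N.
Definition psim (i : 'I_n) (z : int) : 'M[C]_m :=
  if 0 < z then 0
  else kinv i *m mexp (fun s => - (qi i - (qi i)^-1) *: hh i (- s%:Z)) `|z|%N.

Definition serre_word (i j : 'I_n) (mm : nat) (x : 'I_n -> int -> 'M[C]_m)
    (r : 'I_mm -> int) (s : int) (sg : 'S_mm) (k : nat) : 'M[C]_m :=
  (\prod_(t < mm | (t < k)%N) x i (r (sg t))) *m x j s *m
  (\prod_(t < mm | (k <= t)%N) x i (r (sg t))).

Definition is_qlrep : Prop :=
      (forall i, kk i \in unitmx) /\
      (forall i j, kk i *m kk j = kk j *m kk i) /\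
      (forall i j r, r != 0 -> kk i *m hh j r = hh j r *m kk i) /\
      (forall i j r s, r != 0 -> s != 0 -> hh i r *m hh j s = hh j s *m hh i r) /\
      (forall i j r, kk i *m xp j r *m kinv i = (qi i ^ A i j) *: xp j r) /\
      (forall i j r, kk i *m xm j r *m kinv i = (qi i ^ (- A i j)) *: xm j r) /\
      (forall i j r s, r != 0 ->
         hh i r *m xp j s - xp j s *m hh i r
         = ((r%:~R)^-1 * qint i (r * A i j)) *: xp j (r + s)) /\
      (forall i j r s, r != 0 ->
         hh i r *m xm j s - xm j s *m hh i r
         = - (((r%:~R)^-1 * qint i (r * A i j)) *: xm j (r + s))) /\
      (forall i j r s,
         xp i (r + 1) *m xp j s - qi i ^ A i j *: (xp j s *m xp i (r + 1))
         = qi i ^ A i j *: (xp i r *m xp j (s + 1)) - xp j (s + 1) *m xp i r) /\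
      (forall i j r s,
         xm i (r + 1) *m xm j s - qi i ^ (- A i j) *: (xm j s *m xm i (r + 1))
         = qi i ^ (- A i j) *: (xm i r *m xm j (s + 1)) - xm j (s + 1) *m xm i r) /\
      (forall i j r s,
         xp i r *m xm j s - xm j s *m xp i r
         = if i == j then (qi i - (qi i)^-1)^-1 *: (psip i (r + s) - psim i (r + s))
           else 0) /\
      (forall i j, i != j ->
         let mm := `|1 - A i j|%N in
         forall (r : 'I_mm -> int) (s : int),
           (\sum_(sg : 'S_mm) \sum_(k < mm.+1)
               ((-1) ^+ k * qbinom i mm k) *: serre_word i j xp r s sg k = 0)
        /\ (\sum_(sg : 'S_mm) \sum_(k < mm.+1)
               ((-1) ^+ k * qbinom i mm k) *: serre_word i j xm r s sg k = 0)).

(* Weights are I-tuples of integers (coordinates in the fundamental weights). *)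
Definition in_wspace (mu : 'I_n -> int) (v : 'cV[C]_m) : Prop :=
  forall i, kk i *m v = (qi i ^ mu i) *: v.

Definition type1 : Prop :=
  exists s : seq ('I_n -> int), forall v : 'cV[C]_m,
    exists w : ('I_n -> int) -> 'cV[C]_m,
      (forall mu, in_wspace mu (w mu)) /\ v = \sum_(mu <- s) w mu.

(* object of the category \hat F (finite dimensionality is built in) *)
Definition in_Fhat : Prop := is_qlrep /\ type1.

Definition lweight_vector (v : 'cV[C]_m) : Prop :=
  v != 0 /\ forall i s, s != 0 -> exists c : C, hh i s *m v = c *: v.

Definition hlw_vector (v : 'cV[C]_m) : Prop :=
  [/\ lweight_vector v, (exists mu, in_wspace mu v) &
      forall i r, xp i r *m v = 0].

Definition stable_subspace (S : 'cV[C]_m -> Prop) : Prop :=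
  [/\ S 0, (forall v w, S v -> S w -> S (v + w)),
      (forall (c : C) v, S v -> S (c *: v)) &
      (forall v, S v -> forall i r,
         [/\ S (xp i r *m v), S (xm i r *m v), (r != 0 -> S (hh i r *m v)),
             S (kk i *m v) & S (kinv i *m v)])].

Definition in_generated (v w : 'cV[C]_m) : Prop :=
  forall S, stable_subspace S -> S v -> S w.

Definition generated_by (v : 'cV[C]_m) : Prop := forall w, in_generated v w.

Definition simple_mod : Prop :=
  (0 < m)%N /\ forall v : 'cV[C]_m, v != 0 -> generated_by v.

End Rep.

Definition qlhom (m1 m2 : nat) (M1 : qlmod m1) (M2 : qlmod m2)
    (f : 'M[C]_(m2, m1)) : Prop :=
  forall i r,
    [/\ xp M2 i r *m f = f *m xp M1 i r, xm M2 i r *m f = f *m xm M1 i r,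
        (r != 0 -> hh M2 i r *m f = f *m hh M1 i r) &
        kk M2 i *m f = f *m kk M1 i].

Definition lin_injective (m1 m2 : nat) (f : 'M[C]_(m2, m1)) : Prop :=
  forall x : 'cV[C]_m1, f *m x = 0 -> x = 0.
Definition lin_surjective (m1 m2 : nat) (f : 'M[C]_(m2, m1)) : Prop :=
  forall y : 'cV[C]_m2, exists x : 'cV[C]_m1, y = f *m x.

Definition qliso (m1 m2 : nat) (M1 : qlmod m1) (M2 : qlmod m2)
    (f : 'M[C]_(m2, m1)) : Prop :=
  [/\ qlhom M1 M2 f, lin_injective f & lin_surjective f].

Definition dsum2 (p : nat) (M : qlmod p) : qlmod (p + p) :=
  QLMod (fun i r => block_mx (xp M i r) 0 0 (xp M i r))
        (fun i r => block_mx (xm M i r) 0 0 (xm M i r))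
        (fun i r => block_mx (hh M i r) 0 0 (hh M i r))
        (fun i => block_mx (kk M i) 0 0 (kk M i)).

Definition scexp (F : nat -> C) (r : nat) : C :=
  @expcoef C^o *%R 1 F r.

Definition drinfeld_poly (pi : 'I_n -> {poly C}) : Prop :=
  forall i, (pi i)`_0 = 1.

(* wt pi = sum_i (deg pi_i) omega_i *)
Definition wt (pi : 'I_n -> {poly C}) : 'I_n -> int :=
  fun i => ((size (pi i)).-1)%:Z.

(* pi^-(u) = u^{deg pi} pi(u^{-1}), normalized to have constant term 1 *)
Definition pi_minus (p : {poly C}) : {poly C} :=
  (lead_coef p)^-1 *: Poly (rev p).

(* hv i s = h_{i,s}(pi):  exp(- sum_{s>=1} h_{i,+-s}(pi) u^s / [s]_i) = pi_i^+-(u) *)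
Definition h_of_pi (pi : 'I_n -> {poly C}) (hv : 'I_n -> int -> C) : Prop :=
  forall i r,
    scexp (fun s => - hv i s%:Z / qint i s%:Z) r = (pi i)`_r /\
    scexp (fun s => - hv i (- s%:Z) / qint i s%:Z) r = (pi_minus (pi i))`_r.

Definition is_Vpi (pi : 'I_n -> {poly C}) (p : nat) (M : qlmod p) : Prop :=
  [/\ in_Fhat M, simple_mod M &
      exists (v : 'cV[C]_p) (hv : 'I_n -> int -> C),
        [/\ h_of_pi pi hv, in_wspace M (wt pi) v, hlw_vector M v &
            forall i s, s != 0 -> hh M i s *m v = hv i s *: v]].

Definition self_extension (p m : nat) (M : qlmod p) (V : qlmod m)
    (f : 'M[C]_(m, p)) (g : 'M[C]_(p, m)) : Prop :=
  in_Fhat V /\ qlhom M V f /\ qlhom V M g /\ lin_injective f /\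
      lin_surjective g /\ g *m f = 0 /\
      (forall v : 'cV[C]_m, g *m v = 0 -> exists x, v = f *m x).

Definition trivial_ext (p m : nat) (M : qlmod p) (V : qlmod m) : Prop :=
  exists f : 'M[C]_(m, p + p), qliso (dsum2 M) V f.

End QLoop.

(* The submodule generated by a highest-l-weight vector [w] of weight [mu] is spanned
   by the vectors [x^-_{j1,r1} ... x^-_{jk,rk} w]: the relation [[x^+, x^-] = psi^+ - psi^-]
   moves each [x^+] to the right, where it kills [w], and [h_{i,s}], [k_i^{+-1}] preserve
   the span because [w] is an l-weight vector of weight [mu]. Such a vector has weight
   [mu - (alpha_j1 + ... + alpha_jk)], which has a different [k]-character unless [k = 0]
   by positive definiteness of the symmetrized Cartan matrix and because [q] is not a root
   of unity. Hence the [mu]-weight space of [U_q w] is [C w]; for [V(pi)] and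
   [mu = wt pi] this is the line through the highest-l-weight vector [v0].

   If [V_mu] contains a highest-l-weight vector [w] outside [C f(v0)], then [g w] is a
   nonzero multiple of [v0], and [U_q w] maps onto [V(pi)] and meets [f(V(pi))] trivially
   (otherwise it would contain [f(v0)] by simplicity), so the extension splits. Conversely,
   [V(pi) (+) V(pi)] has two independent highest-l-weight vectors of weight [mu]. Finally,
   if [v] in [V_mu] is not an l-weight vector, some [h_{i,s} v - h_{i,s}(pi) v] is a
   nonzero multiple of [f(v0)], so [U_q v] contains [f(V(pi))]; since [g v != 0], it also
   maps onto [V(pi)], hence is [V]. *)

From Pilot Require Import Defs.
From mathcomp Require Import all_boot all_order all_algebra all_fingroup.
From Stdlib Require Import ClassicalEpsilon.
Set Implicit Arguments.
Unset Strict Implicit.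
Unset Printing Implicit Defensive.
Import GRing.Theory Num.Theory.
Local Open Scope ring_scope.

Lemma eigen_sum_eq0 (F : fieldType) (I : Type) m (K : I -> 'M[F]_m)
    (T : eqType) (s : seq T) (y : T -> 'cV[F]_m) (chi : T -> I -> F) (c : I -> F) :
  (forall i j, K i *m K j = K j *m K i) ->
  {in s, forall t i, K i *m y t = chi t i *: y t} ->
  {in s, forall t, exists i, chi t i != c i} ->
  (forall i, K i *m \sum_(t <- s) y t = c i *: \sum_(t <- s) y t) ->
  \sum_(t <- s) y t = 0.
Proof.
move=> Kcomm; elim: s y => [|t s IH] y Hy Hchi Hz; first by rewrite big_nil.
have [i Hi] := Hchi t (mem_head t s).
pose P := K i - (chi t i)%:M.
have P_eigen u (e : I -> F) :
    (forall j, K j *m u = e j *: u) -> forall j, K j *m (P *m u) = e j *: (P *m u).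
  move=> Hu j; rewrite mulmxA /P mulmxBr Kcomm scalar_mxC -mulmxBl -mulmxA Hu.
  by rewrite scalemxAr.
have Py : P *m y t = 0 by rewrite /P mulmxBl Hy ?mem_head // mul_scalar_mx subrr.
have Pz : P *m \sum_(u <- t :: s) y u = \sum_(u <- s) P *m y u.
  by rewrite big_cons mulmxDr Py add0r mulmx_sumr.
have : P *m \sum_(u <- t :: s) y u = 0.
  rewrite Pz; apply: IH => [u Hu j|u Hu|].
  - by apply: P_eigen => k; apply: Hy; rewrite inE Hu orbT.
  - by apply: Hchi; rewrite inE Hu orbT.
  - by rewrite -Pz; apply: P_eigen.
rewrite /P mulmxBl Hz mul_scalar_mx -scalerBl => /eqP.
by rewrite scaler_eq0 subr_eq0 eq_sym (negbTE Hi) => /eqP.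
Qed.

Lemma mulmx_colP (F : nzRingType) m1 m2 (P Q : 'M[F]_(m1, m2)) :
  (forall x : 'cV_m2, P *m x = Q *m x) -> P = Q.
Proof.
move=> H; apply/matrixP => i k.
by have := congr1 (fun u : 'cV_m1 => u i 0) (H (delta_mx k 0)); rewrite -!colE !mxE.
Qed.

Section CartanData.
Variables (n : nat) (A : 'M[int]_n) (d : 'I_n -> nat) (q : C).
Hypothesis HA : finite_cartan A d.
Hypothesis Hq : not_root_of_unity q.

Local Notation qi := (qi d q).

Lemma qi_neq0 i : qi i != 0.
Proof. by rewrite /Defs.qi expf_neq0 //; case: Hq. Qed.

Lemma qi_expz_eq1 i (z : int) : qi i ^ z = 1 -> z = 0.
Proof.
have Hd : (0 < d i)%N by case: HA => _ [_ [_ [H _]]]; exact: H.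
have qiX_neq1 k : (0 < k)%N -> qi i ^+ k != 1.
  by move=> Hk; rewrite /Defs.qi -exprM; case: Hq => _; apply; rewrite muln_gt0 Hd.
case: z => [[|k]|k] // H; exfalso.
  by have := qiX_neq1 k.+1 isT; rewrite -[qi i ^+ _]/(qi i ^ (Posz k.+1)) H eqxx.
move: H => /(congr1 GRing.inv); rewrite -[_ ^ Negz k]/((qi i ^+ k.+1)^-1) invrK invr1.
by move=> H; have := qiX_neq1 k.+1 isT; rewrite H eqxx.
Qed.

(* [root_sum W] is the sum of the simple roots [alpha_j], [(j, r) \in W], in
   the basis of fundamental weights, in which [alpha_j] has coordinates [A i j]. *)
Definition root_sum (W : seq ('I_n * int)) (i : 'I_n) : int := \sum_(t <- W) A i t.1.

Lemma root_sum_count (W : seq ('I_n * int)) i :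
  \sum_j (A i j)%:~R * (count (fun t => t.1 == j) W)%:R = (root_sum W i)%:~R :> rat.
Proof.
elim: W => [|t W IH]; first by rewrite /root_sum big_nil big1 // => j _; rewrite mulr0.
rewrite /root_sum big_cons intrD -/(root_sum W i) -IH /=.
under eq_bigr do rewrite natrD mulrDr.
rewrite big_split /= (bigD1 t.1) //= eqxx mulr1 big1 ?addr0 //.
by move=> j /negbTE Hj; rewrite eq_sym Hj mulr0.
Qed.

Lemma root_sum_eq0 (W : seq ('I_n * int)) : (forall i, root_sum W i = 0) -> W = [::].
Proof.
case: W => // t W H0; exfalso.
pose x : 'I_n -> rat := fun j => (count (fun u => u.1 == j) (t :: W))%:R.
have Hx : x t.1 != 0 by rewrite /x /= eqxx pnatr_eq0.
have [_ [_ [_ [_ [_ [Hpos _]]]]]] := HA.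
(* [x^T (d_i a_ij) x = sum_i x_i d_i (root_sum W i)] for the multiplicities [x] of [W]. *)
have := Hpos x (ex_intro (fun j => x j != 0) _ Hx); rewrite big1 ?ltxx // => i _.
under eq_bigr do rewrite intrM -[((d i)%:Z)%:~R]/((d i)%:R) mulrA -mulrA.
by rewrite -mulr_sumr root_sum_count H0 mulr0.
Qed.

Lemma root_sum_character (W : seq ('I_n * int)) (mu : 'I_n -> int) :
  W != [::] -> exists i, qi i ^ (mu i - root_sum W i) != qi i ^ mu i.
Proof.
move=> HW; apply/not_all_not_ex => Hall; move/eqP: HW; apply; apply: root_sum_eq0 => i.
move/negP/negPn/eqP: (Hall i); rewrite expfzDr ?qi_neq0 // -{2}[qi i ^ mu i]mulr1.
move/mulfI => /(_ (expfz_neq0 _ (qi_neq0 i))) /qi_expz_eq1 /eqP.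
by rewrite oppr_eq0 => /eqP.
Qed.

Lemma in_wspaceB m (X : qlmod n m) mu z1 z2 :
  in_wspace d q X mu z1 -> in_wspace d q X mu z2 -> in_wspace d q X mu (z1 - z2).
Proof. by move=> H1 H2 i; rewrite mulmxBr H1 H2 scalerBr. Qed.

Lemma in_wspaceZ m (X : qlmod n m) mu c z :
  in_wspace d q X mu z -> in_wspace d q X mu (c *: z).
Proof. by move=> H i; rewrite -scalemxAr H !scalerA mulrC. Qed.

Definition lower m (X : qlmod n m) (W : seq ('I_n * int)) (z : 'cV[C]_m) : 'cV[C]_m :=
  foldr (fun t u => xm X t.1 t.2 *m u) z W.

Section Representation.
Variables (m : nat) (X : qlmod n m).
Hypothesis HX : is_qlrep A d q X.

Lemma kk_unit i : kk X i \in unitmx.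
Proof. by case: HX. Qed.

Lemma kk_comm i j : kk X i *m kk X j = kk X j *m kk X i.
Proof. by case: HX => _ [H _]. Qed.

Lemma kk_hh i j r : r != 0 -> kk X i *m hh X j r = hh X j r *m kk X i.
Proof. by case: HX => _ [_ [H _]]; apply: H. Qed.

Lemma kk_xm i j r : kk X i *m xm X j r = qi i ^ (- A i j) *: (xm X j r *m kk X i).
Proof.
case: HX => _ [_ [_ [_ [_ [H _]]]]].
by rewrite scalemxAl -H -!mulmxA mulVmx ?kk_unit // mulmx1.
Qed.

Lemma hh_xm i j r s : r != 0 -> hh X i r *m xm X j s =
  xm X j s *m hh X i r - ((r%:~R)^-1 * qint d q i (r * A i j)) *: xm X j (r + s).
Proof.
case: HX => _ [_ [_ [_ [_ [_ [_ [H _]]]]]]] Hr.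
by rewrite -(H i j r s Hr) addrC subrK.
Qed.

Lemma xp_xm i j r s : xp X i r *m xm X j s = xm X j s *m xp X i r +
  (if i == j then (qi i - (qi i)^-1)^-1 *: (psip d q X i (r + s) - psim d q X i (r + s))
   else 0).
Proof.
case: HX => _ [_ [_ [_ [_ [_ [_ [_ [_ [_ [H _]]]]]]]]]].
by rewrite -H addrC subrK.
Qed.

Lemma in_wspace_kinv mu z i :
  in_wspace d q X mu z -> invmx (kk X i) *m z = qi i ^ (- mu i) *: z.
Proof.
move=> Hz; have Ez : z = qi i ^ mu i *: (invmx (kk X i) *m z).
  by rewrite scalemxAr -Hz mulmxA mulVmx ?kk_unit // mul1mx.
by rewrite {2}Ez scalerA -expfzDr ?qi_neq0 // addNr expr0z scale1r.
Qed.

Lemma lower_wspace mu z W : in_wspace d q X mu z ->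
  in_wspace d q X (fun i => mu i - root_sum W i) (lower X W z).
Proof.
move=> Hz; elim: W => [|[j s] W IH] i /=.
  by rewrite /root_sum big_nil subr0; apply: Hz.
rewrite mulmxA kk_xm -scalemxAl -mulmxA IH scalemxAr scalerA -expfzDr ?qi_neq0 //.
by rewrite -scalemxAr /root_sum big_cons /= opprD addrCA.
Qed.

End Representation.

Definition lower_comb m (X : qlmod n m) (w : 'cV[C]_m)
    (l : seq (C * seq ('I_n * int))) : 'cV[C]_m :=
  \sum_(t <- l) t.1 *: lower X t.2 w.

Section LowerSpan.
Variables (m : nat) (X : qlmod n m) (mu : 'I_n -> int) (w : 'cV[C]_m).
Hypothesis HX : is_qlrep A d q X.
Hypothesis Hw_wt : in_wspace d q X mu w.
Hypothesis Hw_lw : forall i s, s != 0 -> exists c : C, hh X i s *m w = c *: w.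
Hypothesis Hw_xp : forall i r, xp X i r *m w = 0.

Definition lspan (z : 'cV[C]_m) : Prop := exists l, z = lower_comb X w l.

Lemma lspan0 : lspan 0.
Proof. by exists [::]; rewrite /lower_comb big_nil. Qed.

Lemma lspanD z1 z2 : lspan z1 -> lspan z2 -> lspan (z1 + z2).
Proof. by move=> [l1 ->] [l2 ->]; exists (l1 ++ l2); rewrite /lower_comb big_cat. Qed.

Lemma lspanZ c z : lspan z -> lspan (c *: z).
Proof.
move=> [l ->]; exists [seq (c * t.1, t.2) | t <- l].
by rewrite /lower_comb big_map scaler_sumr; apply: eq_bigr => t _; rewrite scalerA.
Qed.

Lemma lspanB z1 z2 : lspan z1 -> lspan z2 -> lspan (z1 - z2).
Proof. by move=> H1 H2; apply: lspanD => //; rewrite -scaleN1r; apply: lspanZ. Qed.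

Lemma lspan_lower W : lspan (lower X W w).
Proof. by exists [:: (1, W)]; rewrite /lower_comb big_seq1 scale1r. Qed.

Definition lspan_closed (P : 'M[C]_m) : Prop := forall W, lspan (P *m lower X W w).

Lemma lspan_closed_apply P z : lspan_closed P -> lspan z -> lspan (P *m z).
Proof.
move=> HP [l ->]; rewrite /lower_comb mulmx_sumr.
elim/big_rec: _ => [|t u _ Hu]; first exact: lspan0.
by rewrite -scalemxAr; apply: lspanD => //; apply: lspanZ.
Qed.

Lemma lspan_closedM P Q : lspan_closed P -> lspan_closed Q -> lspan_closed (P *m Q).
Proof. by move=> HP HQ W; rewrite -mulmxA; apply: lspan_closed_apply. Qed.

Lemma lspan_closedD P Q : lspan_closed P -> lspan_closed Q -> lspan_closed (P + Q).
Proof. by move=> HP HQ W; rewrite mulmxDl; apply: lspanD. Qed.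

Lemma lspan_closedZ c P : lspan_closed P -> lspan_closed (c *: P).
Proof. by move=> HP W; rewrite -scalemxAl; apply: lspanZ. Qed.

Lemma lspan_closedB P Q : lspan_closed P -> lspan_closed Q -> lspan_closed (P - Q).
Proof. by move=> HP HQ W; rewrite mulmxBl; apply: lspanB. Qed.

Lemma lspan_closed0 : lspan_closed 0.
Proof. by move=> W; rewrite mul0mx; apply: lspan0. Qed.

Lemma lspan_closed1 : lspan_closed 1%:M.
Proof. by move=> W; rewrite mul1mx; apply: lspan_lower. Qed.

Lemma lspan_closed_sum (I : Type) (r : seq I) (F : I -> 'M[C]_m) :
  (forall i, lspan_closed (F i)) -> lspan_closed (\sum_(i <- r) F i).
Proof. by move=> H; apply: big_ind => //; [exact: lspan_closed0 | exact: lspan_closedD]. Qed.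

Lemma lspan_closed_xm j s : lspan_closed (xm X j s).
Proof. by move=> W; apply: (lspan_lower ((j, s) :: W)). Qed.

Lemma lspan_closed_kk i : lspan_closed (kk X i).
Proof. by move=> W; rewrite (lower_wspace HX W Hw_wt); apply/lspanZ/lspan_lower. Qed.

Lemma lspan_closed_kinv i : lspan_closed (invmx (kk X i)).
Proof.
by move=> W; rewrite (in_wspace_kinv HX _ (lower_wspace HX W Hw_wt)); apply/lspanZ/lspan_lower.
Qed.

Lemma lspan_closed_hh i r : r != 0 -> lspan_closed (hh X i r).
Proof.
move=> Hr; elim=> [|[j s] W IH] /=.
  by have [c ->] := Hw_lw i Hr; apply/lspanZ/(lspan_lower [::]).
rewrite mulmxA hh_xm // mulmxBl -mulmxA -scalemxAl; apply: lspanB.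
  by apply: lspan_closed_apply => //; apply: lspan_closed_xm.
by apply/lspanZ/(lspan_lower ((j, r + s) :: W)).
Qed.

Lemma lspan_closed_mexp (F : nat -> 'M[C]_m) r :
  (forall s, lspan_closed (F s.+1)) -> lspan_closed (mexp F r).
Proof.
move=> HF; rewrite /mexp /expcoef.
suff H k : lspan_closed (nth 0 (expseq (@mulmx C m m m) 1%:M F r) k) by apply: H.
elim: r k => [|r IH] k /=.
  by case: k => [|[|k]] /=; [exact: lspan_closed1 | exact: lspan_closed0..].
rewrite nth_rcons; case: ifP => _; first exact: IH.
case: ifP => _; last exact: lspan_closed0.
by apply/lspan_closedZ/lspan_closed_sum => s; apply/lspan_closedZ/lspan_closedM.
Qed.

Lemma lspan_closed_psip i z : lspan_closed (psip d q X i z).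
Proof.
rewrite /psip; case: ifP => _; first exact: lspan_closed0.
apply/lspan_closedM; first exact: lspan_closed_kk.
by apply: lspan_closed_mexp => s; apply/lspan_closedZ/lspan_closed_hh.
Qed.

Lemma lspan_closed_psim i z : lspan_closed (psim d q X i z).
Proof.
rewrite /psim; case: ifP => _; first exact: lspan_closed0.
apply/lspan_closedM; first exact: lspan_closed_kinv.
by apply: lspan_closed_mexp => s; apply/lspan_closedZ/lspan_closed_hh; rewrite oppr_eq0.
Qed.

(* [x^+] is pushed through the lowering word by the relation [[x^+, x^-] = psi^+ - psi^-],
   until it kills the highest-weight vector [w]. *)
Lemma lspan_closed_xp i r : lspan_closed (xp X i r).
Proof.
move=> W; elim: W r => [|[j s] W IH] r /=; first by rewrite Hw_xp; apply: lspan0.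
rewrite mulmxA xp_xm // mulmxDl; apply: lspanD.
  by rewrite -mulmxA; apply: lspan_closed_apply => //; apply: lspan_closed_xm.
case: ifP => _; last by rewrite mul0mx; apply: lspan0.
rewrite -scalemxAl; apply/lspanZ/lspan_closedB.
  exact: lspan_closed_psip.
exact: lspan_closed_psim.
Qed.

Lemma lspan_stable : stable_subspace X lspan.
Proof.
split; [exact: lspan0 | exact: lspanD | exact: lspanZ |].
move=> v Hv i r; split; try (move=> Hr); apply: lspan_closed_apply => //.
- exact: lspan_closed_xp.
- exact: lspan_closed_xm.
- exact: lspan_closed_hh.
- exact: lspan_closed_kk.
- exact: lspan_closed_kinv.
Qed.

Lemma generated_lspan z : in_generated X w z -> lspan z.
Proof. by apply; [exact: lspan_stable | exact: (lspan_lower [::])]. Qed.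

End LowerSpan.

Definition lower_comb_const (l : seq (C * seq ('I_n * int))) : C :=
  \sum_(t <- l | t.2 == [::]) t.1.

(* Every nonempty lowering word changes the weight, so only the empty words contribute. *)
Lemma lower_comb_wspace m (X : qlmod n m) (HX : is_qlrep A d q X) mu w l :
  in_wspace d q X mu w -> in_wspace d q X mu (lower_comb X w l) ->
  lower_comb X w l = lower_comb_const l *: w.
Proof.
move=> Hw Hl; apply/eqP; rewrite -subr_eq0; apply/eqP.
have El : lower_comb X w l - lower_comb_const l *: w =
    \sum_(t <- [seq t <- l | t.2 != [::]]) t.1 *: lower X t.2 w.
  rewrite big_filter /lower_comb /lower_comb_const scaler_suml.
  rewrite (bigID (fun t => t.2 == [::])) /= [X in X + _ + _](eq_bigr (fun t => t.1 *: w)).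
    by rewrite addrAC subrr add0r.
  by move=> -[c W] /= /eqP ->.
have Hwt t : in_wspace d q X (fun i => mu i - root_sum t.2 i) (t.1 *: lower X t.2 w).
  exact/in_wspaceZ/lower_wspace.
rewrite El; apply: (eigen_sum_eq0 (kk_comm HX)
  (chi := fun t i => qi i ^ (mu i - root_sum t.2 i)) (c := fun i => qi i ^ mu i)).
- by move=> t _ i; apply: Hwt.
- by move=> t; rewrite mem_filter => /andP [Ht _]; apply: root_sum_character.
- by rewrite -El; apply/in_wspaceB/in_wspaceZ.
Qed.

Lemma generated_hlw_wspace m (X : qlmod n m) (HX : is_qlrep A d q X) mu w z :
  in_wspace d q X mu w -> hlw_vector d q X w ->
  in_generated X w z -> in_wspace d q X mu z -> exists c, z = c *: w.
Proof.
move=> Hw [[_ Hw_lw] _ Hw_xp] /(generated_lspan HX Hw Hw_lw Hw_xp) [l ->] Hl.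
by exists (lower_comb_const l); apply: lower_comb_wspace Hl.
Qed.

Section Homomorphism.
Variables (m1 m2 : nat) (X1 : qlmod n m1) (X2 : qlmod n m2) (h : 'M[C]_(m2, m1)).
Hypothesis Hh : qlhom X1 X2 h.

Lemma in_wspace_hom mu x : in_wspace d q X1 mu x -> in_wspace d q X2 mu (h *m x).
Proof.
by move=> Hx i; have [_ _ _ Hk] := Hh i 0; rewrite mulmxA Hk -mulmxA Hx scalemxAr.
Qed.

Lemma in_wspace_inj_hom mu x :
  lin_injective h -> in_wspace d q X2 mu (h *m x) -> in_wspace d q X1 mu x.
Proof.
move=> Hi Hx i; have [_ _ _ Hk] := Hh i 0.
apply/eqP; rewrite -subr_eq0; apply/eqP; apply: Hi.
by rewrite mulmxBr mulmxA -Hk -mulmxA Hx -scalemxAr subrr.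
Qed.

Hypotheses (HX1 : is_qlrep A d q X1) (HX2 : is_qlrep A d q X2).

Lemma hom_kinv i : invmx (kk X2 i) *m h = h *m invmx (kk X1 i).
Proof.
have [_ _ _ Hk] := Hh i 0.
rewrite -[LHS]mulmx1 -(mulmxV (kk_unit HX1 i)) !mulmxA -[_ *m h *m _]mulmxA -Hk.
by rewrite mulmxA mulVmx ?kk_unit // mul1mx.
Qed.

Lemma stable_preim S :
  stable_subspace X2 S -> stable_subspace X1 (fun x => S (h *m x)).
Proof.
move=> [S0 SD SZ So]; split.
- by rewrite mulmx0.
- by move=> v w Hv Hw; rewrite mulmxDr; apply: SD.
- by move=> c v Hv; rewrite -scalemxAr; apply: SZ.
move=> v Hv i r; have [Hp Hm Hhh Hk] := Hh i r; have [S1 S2 S3 S4 S5] := So _ Hv i r.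
split; rewrite ?mulmxA.
- by rewrite -Hp -mulmxA.
- by rewrite -Hm -mulmxA.
- by move=> Hr; rewrite -(Hhh Hr) -mulmxA; apply: S3.
- by rewrite -Hk -mulmxA.
- by rewrite -hom_kinv -mulmxA.
Qed.

Lemma stable_image S :
  stable_subspace X1 S -> stable_subspace X2 (fun y => exists x, S x /\ y = h *m x).
Proof.
move=> [S0 SD SZ So]; split.
- by exists 0; rewrite mulmx0.
- by move=> _ _ [v [Hv ->]] [w [Hw ->]]; exists (v + w); rewrite mulmxDr; split => //; apply: SD.
- by move=> c _ [v [Hv ->]]; exists (c *: v); rewrite -scalemxAr; split => //; apply: SZ.
move=> _ [v [Hv ->]] i r; have [Hp Hm Hhh Hk] := Hh i r; have [S1 S2 S3 S4 S5] := So _ Hv i r.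
split.
- by exists (xp X1 i r *m v); rewrite mulmxA Hp -mulmxA.
- by exists (xm X1 i r *m v); rewrite mulmxA Hm -mulmxA.
- by move=> Hr; exists (hh X1 i r *m v); rewrite mulmxA (Hhh Hr) -mulmxA; split => //; apply: S3.
- by exists (kk X1 i *m v); rewrite mulmxA Hk -mulmxA.
- by exists (invmx (kk X1 i) *m v); rewrite mulmxA hom_kinv -mulmxA.
Qed.

End Homomorphism.

Lemma in_generated_stable m (X : qlmod n m) w : stable_subspace X (in_generated X w).
Proof.
split.
- by move=> S [S0 _ _ _].
- by move=> v1 v2 H1 H2 S HS Sw; case: (HS) => _ SD _ _; apply: SD; [apply: H1 | apply: H2].
- by move=> c v H S HS Sw; case: (HS) => _ _ SZ _; apply: SZ; apply: H.
move=> v Hv i r; split=> [S HS Sw|S HS Sw|Hr S HS Sw|S HS Sw|S HS Sw];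
  have [_ _ _ So] := HS; have [H1 H2 H3 H4 H5] := So _ (Hv S HS Sw) i r; by [|apply: H3].
Qed.


Section SplitExtension.
Variables (p m : nat) (M : qlmod n p) (V : qlmod n m).
Variables (f : 'M[C]_(m, p)) (g : 'M[C]_(p, m)).
Hypotheses (Hf : qlhom M V f) (Hg : qlhom V M g).
Hypotheses (Hfi : lin_injective f) (Hgf : g *m f = 0).
Hypothesis Hex : forall v : 'cV[C]_m, g *m v = 0 -> exists x, v = f *m x.

Lemma iso_row_mx (s : 'M[C]_(m, p)) :
  qlhom M V s -> g *m s = 1%:M -> qliso (dsum2 M) V (row_mx f s).
Proof.
move=> Hs gs; split.
- move=> i r; have [Fp Fm Fh Fk] := Hf i r; have [Sp Sm Sh Sk] := Hs i r.
  by split; rewrite /= ?mul_mx_row ?mul_row_block ?mulmx0 ?addr0 ?add0r;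
    try move=> Hr; rewrite ?Fp ?Fm ?Fk ?Sp ?Sm ?Sk ?(Fh Hr) ?(Sh Hr).
- move=> x; rewrite -(vsubmxK x) mul_row_col => H0.
  have Hd : dsubmx x = 0.
    have := congr1 (mulmx g) H0.
    rewrite mulmxDr !(mulmxA g) Hgf mul0mx add0r.
    by rewrite [g *m s]gs mul1mx mulmx0.
  by move: H0; rewrite Hd mulmx0 addr0 => /Hfi ->; rewrite col_mx0.
- move=> y; have [x Ex] : exists x, y - s *m (g *m y) = f *m x.
    by apply: Hex; rewrite mulmxBr (mulmxA g s) gs mul1mx subrr.
  by exists (col_mx x (g *m y)); rewrite mul_row_col -Ex subrK.
Qed.

Section Complement.
Variable N : 'cV[C]_m -> Prop.
Hypothesis HN : stable_subspace V N.
Hypothesis N_ker : forall z, N z -> g *m z = 0 -> z = 0.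
Hypothesis N_onto : forall x, exists z, N z /\ g *m z = x.

Lemma complement_section : exists s : 'M[C]_(m, p), (forall x, N (s *m x)) /\ g *m s = 1%:M.
Proof.
have [N0 ND NZ _] := HN.
have [z Hz] : exists z : 'I_p -> 'cV[C]_m, forall k, N (z k) /\ g *m z k = delta_mx k 0.
  by apply: (choice (fun k z => N z /\ g *m z = delta_mx k 0)) => k; apply: N_onto.
pose s : 'M[C]_(m, p) := \matrix_(i, k) z k i 0.
have sE (x : 'cV_p) : s *m x = \sum_k x k 0 *: z k.
  apply/matrixP => i j; rewrite !mxE summxE; apply: eq_bigr => k _.
  by rewrite !mxE (ord1 j) mulrC.
exists s; split.
  by move=> x; rewrite sE; apply: (big_ind N N0 ND) => k _; apply/NZ/(Hz k).1.
apply: mulmx_colP => x; rewrite mul1mx -mulmxA sE mulmx_sumr [RHS]matrix_sum_delta.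
by apply: eq_bigr => k _; rewrite big_ord1 -scalemxAr (Hz k).2.
Qed.

Lemma complement_section_comm (s : 'M[C]_(m, p)) (OV : 'M[C]_m) (OM : 'M[C]_p) :
  (forall x, N (s *m x)) -> g *m s = 1%:M ->
  (forall z, N z -> N (OV *m z)) -> OM *m g = g *m OV -> OV *m s = s *m OM.
Proof.
have [_ ND NZ _] := HN.
move=> Ns gs HO HC; apply: mulmx_colP => x; rewrite -!mulmxA; apply/eqP; rewrite -subr_eq0.
apply/eqP/N_ker; first by apply: ND; [apply: HO | rewrite -scaleN1r; apply: NZ].
by rewrite mulmxBr !mulmxA -HC -!mulmxA !(mulmxA g s) gs !mul1mx subrr.
Qed.

Lemma trivial_of_complement : trivial_ext M V.
Proof.
have [s [Ns gs]] := complement_section; exists (row_mx f s); apply: iso_row_mx => // i r.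
have [_ _ _ So] := HN; have [Gp Gm Gh Gk] := Hg i r.
have comm OV OM := @complement_section_comm s OV OM Ns gs.
split; [apply: comm Gp|apply: comm Gm|move=> Hr; apply: comm (Gh Hr)|apply: comm Gk];
  move=> z /So /(_ i r) [H1 H2 H3 H4 H5]; by [|apply: H3].
Qed.

End Complement.
End SplitExtension.

Lemma hlw_inj_hom m1 m2 (X1 : qlmod n m1) (X2 : qlmod n m2) (h : 'M[C]_(m2, m1)) x :
  qlhom X1 X2 h -> lin_injective h -> hlw_vector d q X1 x -> hlw_vector d q X2 (h *m x).
Proof.
move=> Hh Hi [[x_neq0 x_lw] [mu x_wt] x_xp]; split.
- split; first by apply/eqP => /Hi /eqP; apply/negP.
  move=> i s Hs; have [c Ec] := x_lw i s Hs; have [_ _ Hhh _] := Hh i s.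
  by exists c; rewrite mulmxA (Hhh Hs) -mulmxA Ec scalemxAr.
- by exists mu; apply: in_wspace_hom.
- by move=> i r; have [Hp _ _ _] := Hh i r; rewrite mulmxA Hp -mulmxA x_xp mulmx0.
Qed.

Lemma hlw_vectorZ m (X : qlmod n m) c x :
  c != 0 -> hlw_vector d q X x -> hlw_vector d q X (c *: x).
Proof.
move=> c_neq0 [[x_neq0 x_lw] [mu x_wt] x_xp]; split.
- split; first by rewrite scaler_eq0 negb_or c_neq0.
  by move=> i s /(x_lw i s) [e Ee]; exists e; rewrite -scalemxAr Ee !scalerA mulrC.
- by exists mu; apply: in_wspaceZ.
- by move=> i r; rewrite -scalemxAr x_xp scaler0.
Qed.

Lemma dsum2_col_hom p m (M : qlmod n p) (V : qlmod n m) (F : 'M[C]_(m, p + p)) (a b : C) :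
  qlhom (dsum2 M) V F -> qlhom M V (F *m col_mx a%:M b%:M).
Proof.
have col_comm (O : 'M[C]_p) : block_mx O 0 0 O *m col_mx a%:M b%:M = col_mx a%:M b%:M *m O.
  by rewrite mul_block_col mul_col_mx !mul0mx addr0 add0r !scalar_mxC.
move=> HF i r; have [Fp Fm Fh Fk] := HF i r.
by split; try move=> Hr; rewrite mulmxA ?Fp ?Fm ?(Fh Hr) ?Fk /= -!mulmxA col_comm.
Qed.

Section SelfExtension.
Variables (p m : nat) (M : qlmod n p) (V : qlmod n m).
Variables (f : 'M[C]_(m, p)) (g : 'M[C]_(p, m)).
Variables (mu : 'I_n -> int) (v0 : 'cV[C]_p) (hv : 'I_n -> int -> C).
Hypotheses (HMr : is_qlrep A d q M) (HMs : simple_mod M).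
Hypotheses (Hv0_wt : in_wspace d q M mu v0) (Hv0 : hlw_vector d q M v0).
Hypothesis Hv0_hh : forall i s, s != 0 -> hh M i s *m v0 = hv i s *: v0.
Hypotheses (HVr : is_qlrep A d q V) (Hf : qlhom M V f) (Hg : qlhom V M g).
Hypotheses (Hfi : lin_injective f) (Hgf : g *m f = 0).
Hypothesis Hex : forall v : 'cV[C]_m, g *m v = 0 -> exists x, v = f *m x.

Lemma v0_neq0 : v0 != 0.
Proof. by case: Hv0 => [[]]. Qed.

Lemma M_wspace x : in_wspace d q M mu x -> exists c, x = c *: v0.
Proof. exact: (generated_hlw_wspace HMr Hv0_wt Hv0 (proj2 HMs v0 v0_neq0 x)). Qed.

Lemma generated_f (x y : 'cV[C]_p) : x != 0 -> in_generated V (f *m x) (f *m y).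
Proof. by move=> Hx S HS; apply: (proj2 HMs x Hx y _ (stable_preim Hf HMr HVr HS)). Qed.

Lemma ker_g_wspace z :
  in_wspace d q V mu z -> g *m z = 0 -> exists c, z = c *: (f *m v0).
Proof.
move=> Hz /Hex [x Ex]; rewrite Ex in Hz *.
have [c ->] := M_wspace (in_wspace_inj_hom Hf Hfi Hz).
by exists c; rewrite scalemxAr.
Qed.

Lemma g_wspace z : in_wspace d q V mu z -> exists a, g *m z = a *: v0.
Proof. by move=> Hz; apply/M_wspace/(in_wspace_hom Hg). Qed.

(* The submodule generated by [w] is a complement of [f(M)]: its [mu]-weight space is
   [C w], which does not contain [f v0] since [g w != 0]. *)
Lemma trivial_of_hlw_lift w : in_wspace d q V mu w -> hlw_vector d q V w ->
  g *m w = v0 -> trivial_ext M V.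
Proof.
move=> Hw_wt Hw Hgw; pose N := in_generated V w.
have Nfv0 : ~ N (f *m v0).
  move=> /(generated_hlw_wspace HVr Hw_wt Hw) /(_ (in_wspace_hom Hf Hv0_wt)) [c Ec].
  have := congr1 (mulmx g) Ec; rewrite mulmxA Hgf mul0mx -scalemxAr Hgw => /esym/eqP.
  rewrite scaler_eq0 (negbTE v0_neq0) orbF => /eqP c0.
  by move: Ec; rewrite c0 scale0r => /Hfi /eqP; apply/negP/v0_neq0.
apply: (trivial_of_complement Hf Hg Hfi Hgf Hex (in_generated_stable V w)).
- move=> z Nz /Hex [x Ex]; rewrite Ex in Nz *; have [->|x_neq0] := eqVneq x 0.
    by rewrite mulmx0.
  by case: Nfv0; apply: (generated_f v0 x_neq0 (in_generated_stable V w) Nz).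
- move=> x; have Nv0 : exists z, N z /\ v0 = g *m z.
    by exists w; split; [move=> S _ | rewrite Hgw].
  have [z [Nz ->]] :=
    proj2 HMs v0 v0_neq0 x _ (stable_image Hg HVr HMr (in_generated_stable V w)) Nv0.
  by exists z.
Qed.

Definition unique_hlw : Prop :=
  exists v : 'cV[C]_m,
    [/\ in_wspace d q V mu v, hlw_vector d q V v &
        forall w, in_wspace d q V mu w -> hlw_vector d q V w -> exists c : C, w = c *: v].

Lemma unique_hlw_of_nontrivial : ~ trivial_ext M V -> unique_hlw.
Proof.
move=> Hnt; exists (f *m v0); split; [exact: in_wspace_hom | exact: hlw_inj_hom |].
move=> w Hw_wt Hw; have [a Ea] := g_wspace Hw_wt; have [a0|a_neq0] := eqVneq a 0.
  by apply: ker_g_wspace => //; rewrite Ea a0 scale0r.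
case: Hnt; apply: (trivial_of_hlw_lift (w := a^-1 *: w)); first exact: in_wspaceZ.
  by apply: hlw_vectorZ; rewrite ?invr_eq0.
by rewrite -scalemxAr Ea scalerA mulVf // scale1r.
Qed.

(* The copies of [v0] in the two summands of [M (+) M] are independent
   highest-l-weight vectors of weight [mu]. *)
Lemma nontrivial_of_unique_hlw : unique_hlw -> ~ trivial_ext M V.
Proof.
move=> [v [_ _ Hv_uniq]] [F [HF HFi _]].
pose e a b := F *m col_mx (a *: v0) (b *: v0).
have eE a b : F *m col_mx a%:M b%:M *m v0 = e a b.
  by rewrite -mulmxA mul_col_mx !mul_scalar_mx.
have e_inj a b (x : 'cV[C]_p) : (a != 0) || (b != 0) -> F *m col_mx a%:M b%:M *m x = 0 -> x = 0.
  move=> Hab; rewrite -mulmxA => /HFi /eqP; rewrite mul_col_mx col_mx_eq0 !mul_scalar_mx !scaler_eq0.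
  by case/orP: Hab => /negbTE -> /=; [case/andP => /eqP | case/andP => _ /eqP].
have e_hlw a b : (a != 0) || (b != 0) -> exists c, e a b = c *: v.
  move=> Hab; have He := dsum2_col_hom a b HF; rewrite -eE.
  have He_inj : lin_injective (F *m col_mx a%:M b%:M) by move=> x; apply: e_inj.
  by apply: Hv_uniq; [exact: (in_wspace_hom He Hv0_wt) | exact: (hlw_inj_hom He He_inj Hv0)].
have [c1 E1] : exists c, e 1 0 = c *: v by apply: e_hlw; rewrite oner_neq0.
have [c2 E2] : exists c, e 0 1 = c *: v by apply: e_hlw; rewrite oner_neq0 orbT.
have c1_neq0 : c1 != 0.
  apply: contraNneq v0_neq0 => c10; apply/eqP/(e_inj 1 0); first by rewrite oner_neq0.
  by rewrite eE E1 c10 scale0r.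
have : e c2 (- c1) = 0.
  rewrite (_ : e c2 (- c1) = c2 *: e 1 0 - c1 *: e 0 1); last first.
    rewrite /e !scalemxAr -mulmxBr !scale_col_mx !scalerA !mulr1 !mulr0 !scale0r.
    by rewrite opp_col_mx add_col_mx oppr0 addr0 add0r scaleNr.
  by rewrite E1 E2 !scalerA mulrC subrr.
rewrite -eE => /(e_inj _ _ _); rewrite oppr_eq0 c1_neq0 orbT => /(_ isT) v00.
by move: v0_neq0; rewrite v00 eqxx.
Qed.

Section NonLWeight.
Variable v : 'cV[C]_m.
Hypotheses (v_neq0 : v != 0) (Hv_wt : in_wspace d q V mu v) (Hv_nlw : ~ lweight_vector V v).

Lemma g_non_lweight_neq0 : g *m v != 0.
Proof.
apply/eqP => /(ker_g_wspace Hv_wt) [c Ec]; apply: Hv_nlw; split=> // i s Hs.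
have [_ _ Hh _] := Hf i s; exists (hv i s).
by rewrite Ec -scalemxAr mulmxA (Hh Hs) -mulmxA Hv0_hh // -!scalemxAr scalerA mulrC -scalerA.
Qed.

(* For [h = h_{i,s}] not acting on [v] by a scalar, [h v - h_{i,s}(pi) v] lies in
   [ker g] and in [V_mu], hence is a nonzero multiple of [f v0]. *)
Lemma generated_non_lweight_f x : in_generated V v (f *m x).
Proof.
have [i [s [Hs Hnc]]] : exists i s, s != 0 /\ forall c : C, hh V i s *m v != c *: v.
  apply: NNPP => H; apply: Hv_nlw; split => // j t Ht; apply: NNPP => Hc; apply: H.
  by exists j, t; split => // c; apply/eqP => E; apply: Hc; exists c.
set y := hh V i s *m v - hv i s *: v.
have [a Ea] := g_wspace Hv_wt; have [_ _ Hhg _] := Hg i s.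
have gy0 : g *m y = 0.
  rewrite /y mulmxBr mulmxA -(Hhg Hs) -mulmxA Ea -!scalemxAr Hv0_hh // Ea.
  by rewrite !scalerA mulrC subrr.
have y_wt : in_wspace d q V mu y.
  apply: in_wspaceB; last exact: in_wspaceZ.
  by move=> j; rewrite mulmxA (kk_hh HVr) // -mulmxA Hv_wt scalemxAr.
have [b Eb] := ker_g_wspace y_wt gy0.
have b_neq0 : b != 0.
  by apply: contra_neq (Hnc (hv i s)) => b0; apply/eqP; rewrite -subr_eq0 -/y Eb b0 scale0r.
move=> S HS Sv; have [_ SD SZ So] := HS.
have Sy : S y.
  apply: SD; first by have [_ _ Sh _ _] := So _ Sv i s; apply: Sh.
  by rewrite -scaleN1r; apply/SZ/SZ.
have Sfv0 : S (f *m v0) by have := SZ b^-1 _ Sy; rewrite Eb scalerA mulVf // scale1r.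
exact: (generated_f x v0_neq0 HS Sfv0).
Qed.

Lemma generated_by_non_lweight : generated_by V v.
Proof.
move=> z S HS Sv; have [_ SD _ _] := HS.
have [y [Sy Ey]] : exists y, S y /\ g *m z = g *m y.
  have Sgv : exists y, S y /\ g *m v = g *m y by exists v.
  have [y [Sy ->]] := proj2 HMs _ g_non_lweight_neq0 (g *m z) _ (stable_image Hg HVr HMr HS) Sgv.
  by exists y.
have [x Ex] : exists x, z - y = f *m x by apply: Hex; rewrite mulmxBr Ey subrr.
rewrite -(subrK y z) Ex addrC; apply: SD => //.
exact: (generated_non_lweight_f x HS Sv).
Qed.

End NonLWeight.
End SelfExtension.
End CartanData.

Theorem mainTheorem4 (n : nat) (A : 'M[int]_n) (d : 'I_n -> nat) (q : C)
    (pi : 'I_n -> {poly C}) (p : nat) (M : qlmod n p)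
    (m : nat) (V : qlmod n m) (f : 'M[C]_(m, p)) (g : 'M[C]_(p, m)) :
  finite_cartan A d ->
  not_root_of_unity q ->
  drinfeld_poly pi ->
  is_Vpi A d q pi M ->
  self_extension A d q M V f g ->
  (~ trivial_ext M V <->
     exists v : 'cV[C]_m,
       [/\ in_wspace d q V (wt pi) v, hlw_vector d q V v &
           forall w : 'cV[C]_m, in_wspace d q V (wt pi) w -> hlw_vector d q V w ->
             exists c : C, w = c *: v])
  /\ (~ trivial_ext M V ->
      forall v : 'cV[C]_m, v != 0 -> in_wspace d q V (wt pi) v ->
        ~ lweight_vector V v -> generated_by V v).
Proof.
move=> HA Hq _ [[HMr _] HMs [v0 [hv [_ Hv0_wt Hv0 Hv0_hh]]]].
move=> [[HVr _] [Hf [Hg [Hfi [_ [Hgf Hex]]]]]].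
split; first split.
- exact: (unique_hlw_of_nontrivial HA Hq HMr HMs Hv0_wt Hv0 HVr Hf Hg Hfi Hgf Hex).
- exact: (nontrivial_of_unique_hlw Hv0_wt Hv0).
(* A trivial extension has no vector as in part 2. *)
- move=> _ v v_neq0 Hv_wt Hv_nlw.
  exact: (generated_by_non_lweight HA Hq HMr HMs Hv0_wt Hv0 Hv0_hh HVr Hf Hg Hfi Hex
                                   v_neq0 Hv_wt Hv_nlw).
Qed.
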